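(* Every $E$-linear code $C$ of length $2n$ is two-sided symplectic nice, i.e. $|C|\,|C^{\perp_S}|=|E|^{2n}$.
   Context: $E=\langle \kappa,\tau \mid 2\kappa=2\tau=0,\ \kappa^2=\kappa,\ \tau^2=\tau,\ \kappa\tau=\kappa,\ \tau\kappa=\tau\rangle$ is the non-unital ring $\{0,\kappa,\tau,\zeta\}$ ($|E|=4$), $\zeta=\kappa+\tau$, with $e\kappa=e\tau=e$, $e\zeta=0$ for all $e\in E$. An $E$-linear code of length $2n$ is a left $E$-submodule $C\subseteq E^{2n}$. Symplectic inner product: for $x=(u|v),y=(u'|v')\in E^{2n}$, $\langle x,y\rangle_s=\sum_i u_iv'_i+\sum_i v_iu'_i$. $C^{\perp_S}=\{z\in E^{2n}:\langle z,w\rangle_s=0\text{ and }\langle w,z\rangle_s=0\ \forall w\in C\}$. *)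

From HB Require Import structures.
From mathcomp Require Import all_boot.
Set Implicit Arguments. Unset Strict Implicit. Unset Printing Implicit Defensive.

(* The non-unital ring E = {0, kappa, tau, zeta}, zeta = kappa + tau, char 2. *)
Inductive E := E0 | Ek | Et | Ez.

Definition E_to (x : E) : 'I_4 :=
  match x with E0 => inord 0 | Ek => inord 1 | Et => inord 2 | Ez => inord 3 end.
Definition E_of (i : 'I_4) : E :=
  match val i with 0 => E0 | 1 => Ek | 2 => Et | _ => Ez end.
Lemma E_toK : cancel E_to E_of.
Proof. by case; rewrite /E_of /= inordK. Qed.
HB.instance Definition _ := Finite.copy E (can_type E_toK).

Definition addE (x y : E) : E :=
  match x, y with
  | E0, y => y
  | x, E0 => x
  | Ek, Ek | Et, Et | Ez, Ez => E0
  | Ek, Et | Et, Ek => Ez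
  | Ek, Ez | Ez, Ek => Et
  | Et, Ez | Ez, Et => Ek
  end.

Definition mulE (x y : E) : E :=
  match y with
  | Ek | Et => x
  | _ => E0
  end.

(* words of length 2n, written x = (u | v) *)
Definition word (n : nat) : finType := ({ffun 'I_n -> E} * {ffun 'I_n -> E})%type.

Definition word0 n : word n := ([ffun=> E0], [ffun=> E0]).
Definition addw n (x y : word n) : word n :=
  ([ffun i => addE (x.1 i) (y.1 i)], [ffun i => addE (x.2 i) (y.2 i)]).
Definition scalew n (e : E) (x : word n) : word n :=
  ([ffun i => mulE e (x.1 i)], [ffun i => mulE e (x.2 i)]).

Definition sumE n (f : 'I_n -> E) : E := \big[addE/E0]_(i < n) f i.

Definition symp n (x y : word n) : E :=
  addE (sumE (fun i => mulE (x.1 i) (y.2 i))) (sumE (fun i => mulE (x.2 i) (y.1 i))).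

Definition E_linear n (C : {set word n}) : Prop :=
  [/\ word0 n \in C,
      forall x y, x \in C -> y \in C -> addw x y \in C
    & forall e x, x \in C -> scalew e x \in C].

Definition symp_dual n (C : {set word n}) : {set word n} :=
  [set z | [forall w in C, (symp z w == E0) && (symp w z == E0)]].

From HB Require Import structures.
From mathcomp Require Import all_boot all_algebra.
Set Implicit Arguments. Unset Strict Implicit. Unset Printing Implicit Defensive.
Import GRing.Theory.

(* Additively E is F_2^2, and beta(z, w) = zeta(<z,w>_s) + zeta(<w,z>_s), where zeta(x)
   is the zeta-coordinate of x, is a nondegenerate biadditive F_2-valued form on
   E^{2n}.  As e x = kappa(x) e in E, both coordinates of <z,w>_s and <w,z>_s are
   values beta(z, w') at E-multiples w' of w (and sums of such), so for an E-linear C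
   the two-sided symplectic dual is exactly the beta-orthogonal of C.  For any
   nondegenerate biadditive F_2-valued form on a finite abelian group V and any
   subgroup C, |C| |C^perp| = |V|: count the pairs (z, w) in V x C with
   beta(z, w) = 0 along both coordinates, using that a nonzero character vanishes
   on exactly half of its domain. *)

Lemma card_flip_half (T : finType) (A : {set T}) (t : T -> T) (f : pred T) :
  injective t -> {in A, forall x, t x \in A} -> (forall x, f (t x) = ~~ f x) ->
  #|A| = 2 * #|[set x in A | ~~ f x]|.
Proof.
move=> t_inj tA ft.
have flip_le (g h : pred T) : (forall x, g x -> h (t x)) ->
    #|[set x in A | g x]| <= #|[set x in A | h x]|.
  move=> ght; rewrite -(card_imset _ t_inj); apply: subset_leq_card.
  apply/subsetP => y /imsetP[x]; rewrite !inE => /andP[xA gx] ->.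
  by rewrite tA // ght.
have fC : #|[set x in A | ~~ f x]| = #|[set x in A | f x]|.
  by apply/eqP; rewrite eqn_leq !flip_le // => x; rewrite ft ?negbK.
rewrite -(cardsID [set x | f x] A) mul2n -addnn -setIdE {1}fC; congr (_ + _).
by apply: eq_card => x; rewrite !inE andbC.
Qed.

Section OrthogonalComplement.
Local Open Scope ring_scope.
Variables (V : finZmodType) (b : V -> V -> bool).
Hypothesis b_addl : forall z z' w, b (z + z') w = b z w + b z' w.
Hypothesis b_addr : forall z w w', b z (w + w') = b z w + b z w'.
Hypothesis b_nondeg : forall w, w != 0 -> exists z, b z w.

Variable C : {set V}.
Hypotheses (C0 : 0 \in C) (CD : {in C &, forall x y, x + y \in C}).

Definition orthogonal := [set z | [forall w in C, ~~ b z w]].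

Lemma card_kerl w : (2 * #|[set z | ~~ b z w]| = #|V| * (1 + (w == 0%R)))%N.
Proof.
have [-> | /b_nondeg[z0 bz0w]] := eqVneq w 0.
  have b0 z : b z 0 = false by move: (b_addr z 0 0); rewrite addr0; case: (b z 0).
  by rewrite (eq_card (B := V)) => [|z]; rewrite ?inE ?b0 // mul2n addnn muln2.
rewrite /= muln1 -cardsT (@card_flip_half _ [set: V] (+%R^~ z0) (b^~ w)) //.
- by congr (2 * _); apply: eq_card => z; rewrite !inE.
- exact: addIr.
- by move=> z; rewrite b_addl bz0w; case: (b z w).
Qed.

Lemma card_kerr z :
  (2 * #|[set w in C | ~~ b z w]| = #|C| * (1 + (z \in orthogonal)))%N.
Proof.
rewrite inE; have [z_perp | ] := boolP [forall w in C, ~~ b z w].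
  move/forall_inP: z_perp => z_perp.
  rewrite (eq_card (B := C)) ?mul2n ?muln2 ?addnn // => w.
  by rewrite inE; apply/andb_idr => /z_perp.
case/forall_inPn => w0 w0C /negbNE bzw0.
rewrite muln1 -(@card_flip_half _ C (+%R^~ w0) (b z)) //.
- exact: addIr.
- by move=> w wC; apply: CD.
- by move=> w; rewrite b_addr bzw0; case: (b z w).
Qed.

Lemma card_orthogonal : (#|C| * #|orthogonal| = #|V|)%N.
Proof.
have card_sum (P : pred V) : #|[set x | P x]| = (\sum_x P x)%N.
  by rewrite -sum1dep_card big_mkcond.
have double_count : (\sum_(w in C) #|[set z | ~~ b z w]| =
                     \sum_z #|[set w in C | ~~ b z w]|)%N.
  under eq_bigr do rewrite card_sum.
  rewrite exchange_big; apply: eq_bigr => z _.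
  by rewrite card_sum big_mkcond; apply: eq_bigr => w _; case: (w \in C).
have sum_eq0 : (\sum_(w in C) (w == 0%R) = 1)%N.
  by rewrite (bigD1 0%R) //= eqxx big1 // => w /andP[_ /negbTE ->].
have sum_perp : (\sum_z (z \in orthogonal) = #|orthogonal|)%N.
  by rewrite -sum1_card [RHS]big_mkcond.
have := congr1 (muln 2) double_count; rewrite !big_distrr /=.
under eq_bigr do rewrite card_kerl.
under [in RHS]eq_bigr do rewrite card_kerr.
rewrite -!big_distrr /= !big_split /= sum_eq0 sum_perp !sum_nat_const.
by rewrite !mulnDr !muln1 [(#|C| * #|V|)%N]mulnC => /addnI.
Qed.

End OrthogonalComplement.

Section SymplecticForm.
Local Open Scope ring_scope.

Lemma addEA : associative addE. Proof. by do 3!case. Qed.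
Lemma addEC : commutative addE. Proof. by do 2!case. Qed.
Lemma add0E : left_id E0 addE. Proof. by case. Qed.
Lemma addEE : left_inverse E0 id addE. Proof. by case. Qed.
HB.instance Definition _ := GRing.isZmodule.Build E addEA addEC add0E addEE.

Lemma mulEDl : left_distributive mulE +%R. Proof. by do 3!case. Qed.
Lemma mulEDr : right_distributive mulE +%R. Proof. by do 3!case. Qed.

(* Coordinates in the F_2-basis (kappa, zeta) of E; note tau = kappa + zeta. *)
Definition coef_kappa (x : E) : bool := if x is (Ek | Et) then true else false.
Definition coef_zeta (x : E) : bool := if x is (Et | Ez) then true else false.

Lemma coef_kappa_is_additive : zmod_morphism coef_kappa. Proof. by do 2!case. Qed.
HB.instance Definition _ :=
  GRing.isZmodMorphism.Build E bool coef_kappa coef_kappa_is_additive.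
Lemma coef_zeta_is_additive : zmod_morphism coef_zeta. Proof. by do 2!case. Qed.
HB.instance Definition _ :=
  GRing.isZmodMorphism.Build E bool coef_zeta coef_zeta_is_additive.

Lemma E_eq0 (x : E) : (x == 0) = ~~ coef_kappa x && ~~ coef_zeta x.
Proof. by case: x; rewrite ?eqxx //; apply/negbTE/eqP. Qed.

(* [word n] is a [finType]-valued definition that canonical structure inference
   cannot unfold, so the group structure is put on this convertible copy. *)
Definition wordZ n := ({ffun 'I_n -> E} * {ffun 'I_n -> E})%type.
HB.instance Definition _ n := Finite.on (wordZ n).
HB.instance Definition _ n := GRing.Zmodule.on (wordZ n).

Variable n : nat.
Implicit Types z w : wordZ n.

Lemma sympE z w :
  symp z w = \sum_i mulE (z.1 i) (w.2 i) + \sum_i mulE (z.2 i) (w.1 i).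
Proof. by []. Qed.

Lemma sympDl z z' w : symp (z + z') w = symp z w + symp z' w.
Proof.
rewrite !sympE addrACA -!big_split /=.
by apply: eq_bigr => i _; rewrite !ffunE !mulEDl addrACA.
Qed.

Lemma sympDr z w w' : symp z (w + w') = symp z w + symp z w'.
Proof.
rewrite !sympE addrACA -!big_split /=.
by apply: eq_bigr => i _; rewrite !ffunE !mulEDr addrACA.
Qed.

Lemma coef_symp (chi : {additive E -> bool}) z w :
  chi (symp z w) = \sum_i chi (mulE (z.1 i) (w.2 i) + mulE (z.2 i) (w.1 i)).
Proof.
rewrite sympE raddfD !raddf_sum -big_split.
by apply: eq_bigr => i _; rewrite raddfD.
Qed.

Definition symp_zeta z w : bool := coef_zeta (symp z w) + coef_zeta (symp w z).

Lemma symp_zetaDl z z' w : symp_zeta (z + z') w = symp_zeta z w + symp_zeta z' w.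
Proof. by rewrite /symp_zeta sympDl sympDr !raddfD addrACA. Qed.

Lemma symp_zetaDr z w w' : symp_zeta z (w + w') = symp_zeta z w + symp_zeta z w'.
Proof. by rewrite /symp_zeta sympDl sympDr !raddfD addrACA. Qed.

Lemma coef_symp_scale z w :
  [/\ coef_kappa (symp z w) = symp_zeta z (scalew Ez w),
      coef_kappa (symp w z) = symp_zeta z (scalew Ez w),
      coef_zeta (symp z w) = symp_zeta z (scalew Ek w)
    & coef_zeta (symp w z) = symp_zeta z (w + scalew Ek w)].
Proof.
split; rewrite /symp_zeta !coef_symp -big_split; apply: eq_bigr => i _;
  by rewrite !ffunE; case: (z.1 i) (z.2 i) (w.1 i) (w.2 i) => [] [] [] [].
Qed.

Lemma symp_zeta_nondeg w : w != 0 -> exists z, symp_zeta z w.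
Proof.
move=> w_neq0.
have [i wi_neq0] : exists i, (w.1 i != E0) || (w.2 i != E0).
  apply/existsP; apply: contraR w_neq0 => /existsPn w_eq0; apply/eqP.
  case: w w_eq0 => [w1 w2] /= w_eq0; congr pair; apply/ffunP => j;
    by have /norP[/negbNE/eqP + /negbNE/eqP] := w_eq0 j; rewrite ffunE.
have [a1 [a2 bi]] : exists a1 a2, coef_zeta (mulE a1 (w.2 i) + mulE a2 (w.1 i)) +
                                  coef_zeta (mulE (w.1 i) a2 + mulE (w.2 i) a1).
  move: wi_neq0; case: (w.1 i) (w.2 i) => [] []; rewrite ?eqxx // => _;
    by [exists Ek, E0 | exists Ez, E0 | exists E0, Ek | exists E0, Ez].
exists ([ffun j => if j == i then a1 else E0], [ffun j => if j == i then a2 else E0]).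
rewrite /symp_zeta !coef_symp -big_split (bigD1 i) //= big1 => [|j /negbTE ji];
  rewrite !ffunE ?eqxx ?ji ?addr0 //.
by case: (w.1 j) (w.2 j) => [] [].
Qed.

Lemma symp_dual_orthogonal (C : {set word n}) :
  E_linear C -> symp_dual C = orthogonal symp_zeta C.
Proof.
case=> C0 CD CZ; apply/setP => z; rewrite !inE.
apply/forall_inP/forall_inP => z_perp w wC.
  have /andP[/eqP zw /eqP wz] := z_perp w wC.
  by rewrite /symp_zeta zw wz.
rewrite !E_eq0; have [-> -> -> ->] := coef_symp_scale z w.
have eC e : scalew e w \in C by apply: CZ.
by rewrite !z_perp ?CD.
Qed.

End SymplecticForm.

Theorem mainTheorem13 (n : nat) (C : {set word n}) :
  E_linear C -> #|C| * #|symp_dual C| = #|{: E}| ^ (2 * n).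
Proof.
move=> linC; have [C0 CD _] := linC.
rewrite (symp_dual_orthogonal linC).
rewrite (card_orthogonal (@symp_zetaDl n) (@symp_zetaDr n) (@symp_zeta_nondeg n) C0 CD).
by rewrite card_prod !card_ffun card_ord -expnD addnn -mul2n.
Qed.
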